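(* Let $n \in \mathbb{N}$ be even. For every $\epsilon > 0$ sufficiently small, there exists a set $X$ of $n$ points in $\mathbb{R}^2$ (an instance of the Euclidean TSP in the plane) such that the approximation ratio of X-opt on $X$ is at least $\frac{n}{2}(1-\epsilon)$. That is, there is a noncrossing tour $T$ through $X$ with $\ell(T) \geq \frac{n}{2}(1-\epsilon)\cdot \ell(T^* )$, where $T^*$ is a shortest tour through $X$. In particular, the approximation ratio can be brought arbitrarily close to $\frac{n}{2}$.
   Context: Euclidean TSP in the plane: given a finite set $X \subset \mathbb{R}^2$, a tour is a Hamiltonian cycle on $X$; the length of an edge $\{x,y\}$ is the Euclidean distance $d(x,y)$, and the length $\ell(T)$ of a tour is the sum of its edge lengths. For an edge $e=\{x,y\}$, $L(e)$ denotes the closed line segment from $x$ to $y$. A set of edges is noncrossing if no two of its edges have intersecting line segments (other than at a shared endpoint). X-opt is the local search heuristic that repeatedly replaces two edges of the tour whose line segments intersect by two other edges so as to obtain a tour again; its local optima are exactly the noncrossing tours. The approximation ratio of X-opt on an instance is the ratio of the length of the longest noncrossing tour to the length of an optimal (shortest) tour. *)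

From mathcomp Require Import all_boot all_order all_algebra all_fingroup.
From mathcomp Require Import reals.
Set Implicit Arguments. Unset Strict Implicit. Unset Printing Implicit Defensive.
Import Order.TTheory GRing.Theory Num.Theory.
Local Open Scope ring_scope.

Section TSP.
Variable R : realType.
Definition pt := (R * R)%type.

Definition dist (x y : pt) : R := Num.sqrt ((x.1 - y.1) ^+ 2 + (x.2 - y.2) ^+ 2).

Definition segment (x y : pt) : pt -> Prop :=
  fun z => exists t : R, 0 <= t /\ t <= 1 /\
     z = ((1 - t) * x.1 + t * y.1, (1 - t) * x.2 + t * y.2).

Variable n : nat.
Variable X : 'I_n -> pt.

(* A tour is a Hamiltonian cycle on X, given by a cyclic visiting order
   s 0, s 1, ..., s (n-1), s 0 ; its i-th edge is {s i, s (i+1 mod n)}. *)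
Definition edge (s : 'S_n) (i : 'I_n) : {set 'I_n} := [set s i; s (ordS i)].

Definition tour_length (s : 'S_n) : R :=
  \sum_(i < n) dist (X (s i)) (X (s (ordS i))).

Definition noncrossing (s : 'S_n) : Prop :=
  forall i j : 'I_n, edge s i != edge s j ->
    forall z : pt,
      segment (X (s i)) (X (s (ordS i))) z ->
      segment (X (s j)) (X (s (ordS j))) z ->
      exists2 a : 'I_n, a \in edge s i :&: edge s j & z = X a.

Definition optimal_tour (s : 'S_n) : Prop :=
  forall s' : 'S_n, tour_length s <= tour_length s'.
End TSP.

From mathcomp Require Import all_boot all_order all_algebra all_fingroup.
From mathcomp Require Import reals.
From mathcomp Require Import ring lra zify.
Import Order.TTheory GRing.Theory Num.Theory.
Set Implicit Arguments. Unset Strict Implicit. Unset Printing Implicit Defensive.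
Local Open Scope ring_scope.

(* Put each even point m at (0, m), the last point n - 1 at the apex (D, 0), and every
   other odd point m at abscissa D - 1 on the segment from (0, m) to the apex.  The tour
   0, 1, ..., n - 1 zigzags between the two columns, so each of its n edges has length
   at least D - 1.  It does not cross itself: two of its edges, seen as graphs over an
   abscissa range starting on the y-axis, have end gaps of the same sign, because the odd
   points keep the order of the even ones and no integer lies strictly between i and
   i + 1.  The tour through the even points and then the odd points changes column only
   twice, so the optimum is at most n (n + 1) + 2 D, and D = (n + 1)^2 / eps gives the
   ratio. *)

Section Preliminaries.
Variable R : realType.
Implicit Types (x y : R) (P Q z : pt R).

Lemma segment_sym P Q z : segment P Q z -> segment Q P z.
Proof.
case=> t [t0 [t1 ->]]; exists (1 - t); split; first lra; split; first lra.
by congr pair => /=; ring.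
Qed.

Lemma distC P Q : dist P Q = dist Q P.
Proof. by rewrite /dist -sqrrN opprB -(sqrrN (P.2 - Q.2)) opprB. Qed.

Lemma normrB1_le_dist P Q : `|P.1 - Q.1| <= dist P Q.
Proof. by rewrite /dist -sqrtr_sqr ler_wsqrtr // lerDl sqr_ge0. Qed.

Lemma dist_le_normrB P Q : dist P Q <= `|P.1 - Q.1| + `|P.2 - Q.2|.
Proof.
rewrite /dist -[X in _ <= X]ger0_norm ?addr_ge0 // -sqrtr_sqr ler_wsqrtr //.
rewrite [X in _ <= X]sqrrD !real_normK ?num_real //.
have := mulr_ge0 (normr_ge0 (P.1 - Q.1)) (normr_ge0 (P.2 - Q.2)); lra.
Qed.

Lemma normrB_le_width (a b l h : R) : l <= a <= h -> l <= b <= h -> `|a - b| <= h - l.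
Proof. by move=> /andP[? ?] /andP[? ?]; rewrite ler_norml; apply/andP; split; lra. Qed.

Lemma addr_eq0_mulr_ge0 x y : x + y = 0 -> 0 <= x * y -> x = 0 /\ y = 0.
Proof.
move=> /eqP; rewrite addr_eq0 => /eqP -> hxy.
suff y0 : y = 0 by rewrite y0 oppr0.
apply/eqP; rewrite -sqrf_eq0 eq_le sqr_ge0 andbT.
by rewrite -oppr_ge0 -mulNr.
Qed.

(* [c'] is the height of the second segment at abscissa [u]; a common point at parameter
   [s] on the first segment forces [(1 - s) * (a' - a) + s * (c' - b) = 0]. *)
Lemma segments_meet_at_end (a b a' b' c' u w : R) z :
  w != 0 -> c' * w = a' * (w - u) + b' * u ->
  0 <= (a' - a) * (c' - b) -> (a != a') || (b != c') ->
  segment (0, a) (u, b) z -> segment (0, a') (w, b') z ->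
  (a = a' /\ z = (0, a)) \/ (b = c' /\ z = (u, b)).
Proof.
move=> w0 hc hgap hne [s [s0 [s1 ->]]] [t [_ [_ [/= hx hy]]]].
move: hx; rewrite !mulr0 !add0r => /esym/(canRL (mulfK w0)) ht.
have key : (1 - s) * (a' - a) + s * (c' - b) = 0.
  apply: (mulIf w0); rewrite mul0r.
  have -> : (1 - s) * (a' - a) + s * (c' - b) =
            (1 - s) * a' + s * c' - ((1 - s) * a + s * b) by ring.
  rewrite hy ht; transitivity (s * (c' * w - (a' * (w - u) + b' * u))); first by field.
  by rewrite hc subrr mulr0.
have [/eqP hl /eqP hr] : (1 - s) * (a' - a) = 0 /\ s * (c' - b) = 0.
  by apply: (addr_eq0_mulr_ge0 key); rewrite mulrACA mulr_ge0 // mulr_ge0 // subr_ge0.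
move: hl hr; rewrite !mulf_eq0 !subr_eq0 [a' == _]eq_sym [c' == _]eq_sym.
case: (eqVneq a a') hne => [<- /= hbc _ | _ _].
  rewrite (negbTE hbc) orbF => /eqP ->; left; split=> //.
  by congr pair; ring.
rewrite orbF => /eqP <-; rewrite oner_eq0 /= => /eqP ->; right.
by split=> //; congr pair; ring.
Qed.

Lemma natr_sub_mul_sub_succ_ge0 (m k : nat) : 0 <= (m%:R - k%:R) * (m%:R - k.+1%:R) :> R.
Proof.
case: (leqP m k) => hmk.
  by rewrite mulr_le0 // subr_le0 ler_nat // ltnW.
by rewrite mulr_ge0 // subr_ge0 ler_nat // ltnW.
Qed.

Lemma sum_if_succ_eq_le n k x :
  0 <= x -> \sum_(i < n) (if i.+1 == k then x else 0) <= x.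
Proof.
move=> x0; rewrite -big_mkcond sumr_const -[X in _ <= X]mulr1n ler_wpMn2l //.
apply/card_le1_eqP => i j /eqP ik /eqP jk.
by apply: val_inj; apply: succn_inj; rewrite ik jk.
Qed.

Lemma exists_optimal_tour n (X : 'I_n -> pt R) : exists s, optimal_tour X s.
Proof.
have [s _ hs] := arg_minP (tour_length X) (erefl true : xpredT (1%g : 'S_n)).
by exists s => s'; apply: hs.
Qed.

Lemma ratio_bound (N eps D : R) :
  0 <= N -> 0 < eps -> eps < 1 -> eps * D = (N + 1) ^+ 2 ->
  N / 2 * (1 - eps) * (N * (N + 1) + D *+ 2) <= N * (D - 1).
Proof.
move=> N_ge0 eps_gt0 eps_lt1 epsD.
have -> : N / 2 * (1 - eps) * (N * (N + 1) + D *+ 2) =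
          N * (D - 1) - N * ((N + 1) ^+ 2 - 1 - (1 - eps) * (N * (N + 1)) / 2).
  by rewrite -epsD mulr2n; field.
by rewrite lerBlDr lerDl mulr_ge0 //; nra.
Qed.

End Preliminaries.

Section Construction.
Variables (R : realType) (n : nat) (D : R).
Hypotheses (n_even : ~~ odd n) (D_gt1 : 1 < D).

Definition vertex (m : nat) : pt R :=
  if ~~ odd m then (0, m%:R) else if m == n.-1 then (D, 0) else (D - 1, m%:R / D).

Definition points (i : 'I_n) : pt R := vertex i.

(* Edge [i] of the tour 0, 1, ..., n - 1 runs from its even end on the y-axis to its odd
   end; it is the zigzag edge {i, i + 1} when [i.+2 < n] and ends at the apex otherwise. *)
Definition left_end (i : 'I_n) : 'I_n := if odd i then ordS i else i.
Definition right_end (i : 'I_n) : 'I_n := if odd i then i else ordS i.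

Lemma D_gt0 : 0 < D.
Proof. exact: lt_trans ltr01 D_gt1. Qed.

Lemma D_neq0 : D != 0.
Proof. by rewrite gt_eqF // D_gt0. Qed.

Lemma edge_ends (i : 'I_n) :
  (left_end i, right_end i) = (i, ordS i) \/ (left_end i, right_end i) = (ordS i, i).
Proof. by rewrite /left_end /right_end; case: (odd i); [right | left]. Qed.

Lemma odd_ordS (i : 'I_n) : odd (ordS i) = ~~ odd i.
Proof. by rewrite /= odd_mod ?(negbTE n_even). Qed.

Lemma left_end_even (i : 'I_n) : ~~ odd (left_end i).
Proof. by rewrite /left_end; case: ifP => [oi | /negbT //]; rewrite odd_ordS oi. Qed.

Lemma right_end_odd (i : 'I_n) : odd (right_end i).
Proof. by rewrite /right_end; case: ifP => // /negbT ei; rewrite odd_ordS. Qed.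

Lemma ends_zigzag (i : 'I_n) : (i.+2 < n)%N ->
  left_end i = (i + odd i)%N :> nat /\ right_end i = (i + ~~ odd i)%N :> nat.
Proof.
move=> hi; rewrite /left_end /right_end.
by case: (odd i); rewrite /= ?addn0 ?addn1 ?modn_small //; lia.
Qed.

Lemma right_end_long (i : 'I_n) : (n <= i.+2)%N -> right_end i = n.-1 :> nat.
Proof.
have := ltn_ord i; rewrite /right_end => hi hni.
case: ifP => oi /=; first by lia.
by rewrite modn_small; lia.
Qed.

Lemma points_left_end (i : 'I_n) : points (left_end i) = (0, (left_end i)%:R).
Proof. by rewrite /points /vertex left_end_even. Qed.

Lemma points_right_end_zigzag (i : 'I_n) : (i.+2 < n)%N ->
  points (right_end i) = (D - 1, (right_end i)%:R / D).
Proof.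
move=> hi; rewrite /points /vertex right_end_odd /=.
by have [_ ->] := ends_zigzag hi; rewrite ifN //; apply/eqP; lia.
Qed.

Lemma points_right_end_long (i : 'I_n) : (n <= i.+2)%N -> points (right_end i) = (D, 0).
Proof. by move=> hi; rewrite /points /vertex right_end_odd right_end_long ?eqxx. Qed.

Definition on_edge (i : 'I_n) (z : pt R) :=
  segment (points (left_end i)) (points (right_end i)) z.

Definition meet_at_common_end (i j : 'I_n) (z : pt R) :=
  (left_end i = left_end j /\ z = points (left_end i)) \/
  (right_end i = right_end j /\ z = points (right_end i)).

Lemma eqr_nat_ord (i j : 'I_n) : ((i : nat)%:R == (j : nat)%:R :> R) = (i == j).
Proof. by rewrite eqr_nat. Qed.

Lemma eqr_nat_ord_divD (i j : 'I_n) : ((i : nat)%:R / D == (j : nat)%:R / D) = (i == j).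
Proof. by rewrite (inj_eq (divIf D_neq0)) eqr_nat_ord. Qed.

Lemma zigzag_edges_meet (i j : 'I_n) z : (i.+2 < n)%N -> (j.+2 < n)%N ->
  (left_end i != left_end j) || (right_end i != right_end j) ->
  on_edge i z -> on_edge j z -> meet_at_common_end i j z.
Proof.
move=> hi hj hne; rewrite /on_edge !points_left_end !points_right_end_zigzag // => zi zj.
have [li ri] := ends_zigzag hi; have [lj rj] := ends_zigzag hj.
have hgap : 0 <= ((left_end j)%:R - (left_end i)%:R) *
                 ((right_end j)%:R / D - (right_end i)%:R / D) :> R.
  rewrite -mulrBl mulrA; apply: mulr_ge0; last by rewrite invr_ge0 ltW // D_gt0.
  rewrite li ri lj rj; case: (leqP i j) => hij.
    by apply: mulr_ge0; rewrite subr_ge0 ler_nat; lia.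
  by apply: mulr_le0; rewrite subr_le0 ler_nat; lia.
have D1_neq0 : D - 1 != 0 by rewrite subr_eq0 gt_eqF.
have hc : (right_end j)%:R / D * (D - 1) =
          (left_end j)%:R * ((D - 1) - (D - 1)) + (right_end j)%:R / D * (D - 1).
  by rewrite subrr mulr0 add0r.
have hne' : ((left_end i)%:R != (left_end j)%:R :> R) ||
            ((right_end i)%:R / D != (right_end j)%:R / D).
  by rewrite eqr_nat_ord eqr_nat_ord_divD.
case: (segments_meet_at_end D1_neq0 hc hgap hne' zi zj) => [[/eqP e ->] | [/eqP e ->]].
  by left; rewrite points_left_end; split=> //; apply/eqP; rewrite -eqr_nat_ord.
right; rewrite points_right_end_zigzag //; split=> //.
by apply/eqP; rewrite -eqr_nat_ord_divD.
Qed.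

Lemma zigzag_long_edges_meet (i j : 'I_n) z : (i.+2 < n)%N -> (n <= j.+2)%N ->
  on_edge i z -> on_edge j z -> left_end i = left_end j /\ z = points (left_end i).
Proof.
move=> hi hj; rewrite /on_edge !points_left_end points_right_end_zigzag //.
rewrite points_right_end_long // => zi zj.
have [li ri] := ends_zigzag hi.
have hc : (left_end j)%:R / D * D = (left_end j)%:R * (D - (D - 1)) + 0 * (D - 1) :> R.
  by rewrite mul0r addr0 divfK ?D_neq0 //; ring.
have hgap : 0 <= ((left_end j)%:R - (left_end i)%:R) *
                 ((left_end j)%:R / D - (right_end i)%:R / D) :> R.
  rewrite -mulrBl mulrA; apply: mulr_ge0; last by rewrite invr_ge0 ltW // D_gt0.
  rewrite li ri; case: (odd i) => /=; rewrite ?addn0 ?addn1; last first.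
    exact: natr_sub_mul_sub_succ_ge0.
  by rewrite mulrC natr_sub_mul_sub_succ_ge0.
have hpar : right_end i != left_end j.
  by apply: contraTneq (right_end_odd i) => ->; exact: left_end_even.
have hne : ((left_end i)%:R != (left_end j)%:R :> R) ||
           ((right_end i)%:R / D != (left_end j)%:R / D).
  by rewrite eqr_nat_ord_divD hpar orbT.
case: (segments_meet_at_end D_neq0 hc hgap hne zi zj) => [[/eqP e ->] | [/eqP e _]].
  by split=> //; apply/eqP; rewrite -eqr_nat_ord.
by move: e; rewrite eqr_nat_ord_divD (negbTE hpar).
Qed.

Lemma long_edges_meet (i j : 'I_n) z : (n <= i.+2)%N -> (n <= j.+2)%N ->
  (left_end i != left_end j) || (right_end i != right_end j) ->
  on_edge i z -> on_edge j z -> meet_at_common_end i j z.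
Proof.
move=> hi hj hne; rewrite /on_edge !points_left_end !points_right_end_long // => zi zj.
have er : right_end i = right_end j by apply: val_inj; rewrite /= !right_end_long.
have hc : 0 * D = (left_end j)%:R * (D - D) + 0 * D :> R by rewrite subrr mulr0 add0r.
have hgap : 0 <= ((left_end j)%:R - (left_end i)%:R) * (0 - 0) :> R by rewrite subrr mulr0.
have hne' : ((left_end i)%:R != (left_end j)%:R :> R) || (0 != 0 :> R).
  by rewrite eqxx orbF eqr_nat_ord; move: hne; rewrite er eqxx orbF.
case: (segments_meet_at_end D_neq0 hc hgap hne' zi zj) => [[/eqP e ->] | [_ ->]].
  by left; rewrite points_left_end; split=> //; apply/eqP; rewrite -eqr_nat_ord.
by right; rewrite points_right_end_long.
Qed.

Lemma edges_meet_at_common_end (i j : 'I_n) z :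
  (left_end i != left_end j) || (right_end i != right_end j) ->
  on_edge i z -> on_edge j z -> meet_at_common_end i j z.
Proof.
move=> hne zi zj.
case: (ltnP i.+2 n) (ltnP j.+2 n) => hi [] hj.
- exact: zigzag_edges_meet.
- by left; apply: zigzag_long_edges_meet zi zj.
- have [e ->] := zigzag_long_edges_meet hj hi zj zi.
  by left; rewrite e.
- exact: long_edges_meet.
Qed.

Lemma noncrossing_zigzag : noncrossing points 1.
Proof.
have edgeE (k : 'I_n) : edge 1 k = [set left_end k; right_end k].
  by rewrite /edge !perm1; case: (edge_ends k) => -[-> ->] //; rewrite setUC.
move=> i j hij z; rewrite !perm1 => zi zj.
have on_edgeE (k : 'I_n) : segment (points k) (points (ordS k)) z -> on_edge k z.
  by rewrite /on_edge; case: (edge_ends k) => -[-> ->] // /segment_sym.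
have hne : (left_end i != left_end j) || (right_end i != right_end j).
  by apply: contraNT hij; rewrite negb_or !negbK !edgeE => /andP[/eqP -> /eqP ->].
case: (edges_meet_at_common_end hne (on_edgeE i zi) (on_edgeE j zj)) => -[e ->].
  by exists (left_end i) => //; rewrite !edgeE !inE e !eqxx.
by exists (right_end i) => //; rewrite !edgeE !inE e !eqxx !orbT.
Qed.

Lemma points_inj : injective points.
Proof.
pose label (P : pt R) := if P.1 == 0 then P.2 else if P.1 == D then (n.-1)%:R else P.2 * D.
have label_vertex m : label (vertex m) = m%:R.
  rewrite /label /vertex; case: (odd m) => /=; last by rewrite eqxx.
  case: (eqVneq m n.-1) => [-> | _] /=; first by rewrite (negbTE D_neq0) eqxx.
  have D1_gt0 : 0 < D - 1 by rewrite subr_gt0.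
  have D1_ltD : D - 1 < D by rewrite ltrBlDr ltrDl.
  by rewrite (gt_eqF D1_gt0) (lt_eqF D1_ltD) divfK ?D_neq0.
move=> i j e; apply/eqP; rewrite -eqr_nat_ord -!label_vertex.
by rewrite -[vertex i]/(points i) e.
Qed.


Lemma vertex_x_even m : ~~ odd m -> (vertex m).1 = 0.
Proof. by rewrite /vertex => ->. Qed.

Lemma vertex_x_odd m : odd m -> D - 1 <= (vertex m).1 <= D.
Proof. by rewrite /vertex => ->; case: eqP => _ /=; apply/andP; split; lra. Qed.

Lemma vertex_y m : (m < n)%N -> 0 <= (vertex m).2 <= n%:R.
Proof.
move=> hm; have hmn : m%:R <= n%:R :> R by rewrite ler_nat ltnW.
rewrite /vertex; case: ifP => _ /=; first by rewrite ler0n.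
case: eqP => _ /=; first by rewrite lexx ler0n.
rewrite divr_ge0 ?ler0n ?(ltW D_gt0) //= ler_pdivrMr ?D_gt0 //.
by rewrite (le_trans hmn) // ler_peMr ?ler0n ?(ltW D_gt1).
Qed.

Lemma vertex_x m : 0 <= (vertex m).1 <= D.
Proof.
case: (boolP (odd m)) => [/vertex_x_odd | /vertex_x_even ->].
  by have := D_gt1; move=> ? /andP[? ?]; apply/andP; split; lra.
by rewrite lexx (ltW D_gt0).
Qed.

Lemma dist_vertex_parity m m' : ~~ odd m -> odd m' -> D - 1 <= dist (vertex m) (vertex m').
Proof.
move=> /vertex_x_even hm /vertex_x_odd /andP[hm' _].
apply: le_trans (normrB1_le_dist _ _).
by rewrite hm sub0r normrN ger0_norm //; have := D_gt1; lra.
Qed.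

Lemma dist_vertex_same m m' : (m < n)%N -> (m' < n)%N -> odd m = odd m' ->
  dist (vertex m) (vertex m') <= n%:R + 1.
Proof.
move=> hm hm' hpar; apply: le_trans (dist_le_normrB _ _) _; rewrite addrC lerD //.
  by rewrite -[n%:R]subr0; apply: normrB_le_width; apply: vertex_y.
case: (boolP (odd m)) hpar => [om /esym om' | em /esym/negbT em'].
  have -> : 1 = D - (D - 1) :> R by rewrite opprB addrC subrK.
  by apply: normrB_le_width; apply: vertex_x_odd.
by rewrite !vertex_x_even // subrr normr0 ler01.
Qed.

Lemma dist_vertex_le m m' : (m < n)%N -> (m' < n)%N ->
  dist (vertex m) (vertex m') <= n%:R + D.
Proof.
move=> hm hm'; apply: le_trans (dist_le_normrB _ _) _; rewrite addrC lerD //.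
  by rewrite -[n%:R]subr0; apply: normrB_le_width; apply: vertex_y.
by rewrite -[D]subr0; apply: normrB_le_width; apply: vertex_x.
Qed.

Lemma zigzag_tour_length_ge : n%:R * (D - 1) <= tour_length points 1.
Proof.
have -> : n%:R * (D - 1) = \sum_(i < n) (D - 1) by rewrite sumr_const card_ord mulr_natl.
apply: ler_sum => i _; rewrite !perm1.
have -> : dist (points i) (points (ordS i)) =
          dist (points (left_end i)) (points (right_end i)).
  by case: (edge_ends i) => -[-> ->] //; rewrite distC.
exact: dist_vertex_parity (left_end_even i) (right_end_odd i).
Qed.

Definition evens_then_odds (k : nat) : nat :=
  if (k < n./2)%N then k.*2 else (k - n./2).*2.+1.

Lemma evens_then_odds_lt k : (k < n)%N -> (evens_then_odds k < n)%N.
Proof. by rewrite /evens_then_odds; case: ifP; lia. Qed.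

Lemma odd_evens_then_odds k : odd (evens_then_odds k) = (n./2 <= k)%N.
Proof. by rewrite /evens_then_odds; case: ltnP; rewrite /= odd_double. Qed.

Definition evens_then_odds_ord (i : 'I_n) : 'I_n :=
  Ordinal (evens_then_odds_lt (ltn_ord i)).

Lemma evens_then_odds_ord_inj : injective evens_then_odds_ord.
Proof.
move=> i j /(congr1 val); rewrite /= /evens_then_odds => e; apply/val_inj => /=.
by move: e; case: ifP; case: ifP; lia.
Qed.

Definition evens_then_odds_tour : 'S_n := perm evens_then_odds_ord_inj.

Lemma evens_then_odds_edge_le (i : 'I_n) :
  dist (points (evens_then_odds_tour i)) (points (evens_then_odds_tour (ordS i))) <=
  n%:R + 1 + ((if i.+1 == n./2 then D else 0) + (if i.+1 == n then D else 0)).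
Proof.
rewrite !permE /points /=.
have lt_i := evens_then_odds_lt (ltn_ord i).
have lt_Si := evens_then_odds_lt (ltn_ord (ordS i)).
have D_ge0 := ltW D_gt0.
case: (boolP ((i.+1 == n./2) || (i.+1 == n))) => [cross | /norP[ni1 ni2]].
  apply: le_trans (dist_vertex_le lt_i lt_Si) _.
  by case/orP: cross => /eqP ->; rewrite eqxx; case: eqP => _; lra.
rewrite (negbTE ni1) (negbTE ni2) !addr0 dist_vertex_same //.
rewrite !odd_evens_then_odds /= modn_small; last by have := ltn_ord i; lia.
by apply/idP/idP; lia.
Qed.

Lemma evens_then_odds_tour_length_le :
  tour_length points evens_then_odds_tour <= n%:R * (n%:R + 1) + D *+ 2.
Proof.
apply: le_trans (ler_sum _ (fun i _ => evens_then_odds_edge_le i)) _.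
rewrite big_split /= sumr_const card_ord mulr_natl big_split /= mulr2n lerD2l.
by rewrite lerD ?sum_if_succ_eq_le // ltW // D_gt0.
Qed.

End Construction.

Theorem theorem1 (R : realType) (n : nat) (hn : ~~ odd n) :
  exists2 eps0 : R, 0 < eps0 &
    forall eps : R, 0 < eps -> eps < eps0 ->
      exists X : 'I_n -> pt R, injective X /\
        exists T : 'S_n, noncrossing X T /\
        exists Topt : 'S_n, optimal_tour X Topt /\
          tour_length X T >= (n%:R / 2) * (1 - eps) * tour_length X Topt.
Proof.
exists 1 => // eps eps_gt0 eps_lt1.
pose N : R := n%:R; pose D := (N + 1) ^+ 2 / eps.
have epsD : eps * D = (N + 1) ^+ 2 by rewrite mulrC divfK // gt_eqF.
have D_gt1 : 1 < D.
  have N1_ge1 : 1 <= (N + 1) ^+ 2 by rewrite exprn_ege1 // lerDr ler0n.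
  by rewrite ltr_pdivlMr // mul1r (lt_le_trans eps_lt1).
have [Topt optimal] := exists_optimal_tour (@points R n D).
exists (@points R n D); split; first exact: points_inj.
exists 1%g; split; first exact: noncrossing_zigzag.
exists Topt; split=> //.
apply: le_trans _ (zigzag_tour_length_ge hn D_gt1).
apply: le_trans (ratio_bound (ler0n R n) eps_gt0 eps_lt1 epsD).
apply: ler_wpM2l; first by rewrite mulr_ge0 ?divr_ge0 ?ler0n // subr_ge0 ltW.
exact: le_trans (optimal _) (evens_then_odds_tour_length_le hn D_gt1).
Qed.
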